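(* For $n\ge 0$ let $s_n$ be the number of permutations of $\{1,\dots,n\}$ that are achievable by two stacks in series, and let $t_n$ be the number of achievable permutations $a_1\cdots a_n$ of $\{1,\dots,n\}$ for which there is no $j$ with $a_{j+1}=a_j+1$ (with $s_0=t_0=1$). Let $S(x)=\sum_{n\ge0}s_nx^n$ and $T(x)=\sum_{n\ge0}t_nx^n$. Then $S(x)=T\!\left(\frac{x}{1-x}\right)$, and consequently for every $n\ge1$, $$s_n=\sum_{i=1}^{n}\binom{n-1}{i-1}t_i.$$
   Context: Two stacks in series: a machine with an input stream, a first stack, a second stack and an output stream, with three moves: $\rho$ moves the next element of the input onto the top of the first stack; $\lambda$ moves the top element of the first stack onto the top of the second stack; $\mu$ moves the top element of the second stack to the end of the output. A permutation $q$ of $\{1,\dots,m\}$ is achievable if, starting with input $1,2,\dots,m$ (in this order) and both stacks empty, some finite sequence of these moves ends with empty input, empty stacks, and output equal to $q$. *)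

From mathcomp Require Import all_boot all_order all_algebra.
From mathcomp Require Import boolp.
Set Implicit Arguments. Unset Strict Implicit. Unset Printing Implicit Defensive.
Import GRing.Theory.

(* Two stacks in series.  A state is (input, stack1, stack2, output);
   stacks are lists with the top element at the head; the output is read
   left to right (new elements are appended at the end). *)
Record ts_state := TSState {
  ts_in : seq nat; ts_st1 : seq nat; ts_st2 : seq nat; ts_out : seq nat }.

Inductive ts_move := Rho | Lambda | Mu.

Definition ts_step (m : ts_move) (s : ts_state) : option ts_state :=
  match m, s with
  | Rho, TSState (x :: i) a b o => Some (TSState i (x :: a) b o)
  | Lambda, TSState i (x :: a) b o => Some (TSState i a (x :: b) o)
  | Mu, TSState i a (x :: b) o => Some (TSState i a b (rcons o x))
  | _, _ => None
  end.

Fixpoint ts_run (ms : seq ts_move) (s : ts_state) : option ts_state :=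
  match ms with
  | [::] => Some s
  | m :: ms' => match ts_step m s with
                | Some s' => ts_run ms' s'
                | None => None
                end
  end.

Definition achievable (m : nat) (q : seq nat) : Prop :=
  exists ms : seq ts_move,
    ts_run ms (TSState (iota 1 m) [::] [::] [::]) = Some (TSState [::] [::] [::] q).

Definition no_succession (q : seq nat) : bool :=
  all (fun p : nat * nat => p.2 != p.1.+1) (zip q (behead q)).

(* s_n : number of achievable permutations of {1..n};
   t_n : those among them with no succession.  (permutations (iota 1 n) lists
   each permutation of 1..n exactly once.) *)
Definition s_num (n : nat) : nat :=
  count (fun q => `[< achievable n q >]) (permutations (iota 1 n)).

Definition t_num (n : nat) : nat :=
  count (fun q => `[< achievable n q >] && no_succession q)
        (permutations (iota 1 n)).

From mathcomp Require Import all_boot all_order all_algebra.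
From mathcomp Require Import boolp zify ring.
Import GRing.Theory.
Set Implicit Arguments. Unset Strict Implicit. Unset Printing Implicit Defensive.

(* Let h n m count the achievable permutations of 1..n with no succession
   a, a+1 where a >= m, so that h n n = s_n and h n 1 = t_n.  A permutation
   counted by h (n+1) (v+1) but not by h (n+1) v has v immediately followed by
   v+1; deleting v+1 and renumbering maps these bijectively onto the
   permutations counted by h n v, since every run of the machine on one side
   can be imitated on the other, the block v, v+1 travelling as the single
   letter v.  Hence h (n+1) (v+1) = h (n+1) v + h n v, which unrolls to
   h n (k+1) = sum_i C(k, n-i) t_i, and k = n-1 gives the binomial formula.
   The series identity then follows from sum_n C(n-1, i-1) x^n = (x/(1-x))^i. *)

Lemma ts_run_cat ms1 ms2 s s1 :
  ts_run ms1 s = Some s1 -> ts_run (ms1 ++ ms2) s = ts_run ms2 s1.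
Proof.
elim: ms1 s => [|m ms1 IH] s /=; first by case=> ->.
by case: (ts_step m s) => // s'; apply: IH.
Qed.

Lemma ts_run_simulate (f : ts_state -> ts_state) :
  (forall m s s1, ts_step m s = Some s1 ->
     exists ms, ts_run ms (f s) = Some (f s1)) ->
  forall ms s s1, ts_run ms s = Some s1 ->
    exists ms', ts_run ms' (f s) = Some (f s1).
Proof.
move=> sim_step; elim=> [|m ms IH] s s1 /=; first by case=> ->; exists [::].
case Es: (ts_step m s) => [s'|] // /IH [ms1 run1].
have [ms0 run0] := sim_step _ _ _ Es.
by exists (ms0 ++ ms1); rewrite (ts_run_cat _ run0).
Qed.

Lemma iotaSr m n : iota m n.+1 = rcons (iota m n) (m + n).
Proof. by rewrite -addn1 iotaD cats1. Qed.

Definition no_succ_ge m : rel nat := fun a b => (a < m) || (b != a.+1).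

Section Succession.

Variable v : nat.

Definition shift_up x := if v < x then x.+1 else x.
Definition shift_down x := if v.+1 < x then x.-1 else x.

Definition expand x := if x == v then [:: v; v.+1] else [:: shift_up x].
Definition expand_rev x := if x == v then [:: v.+1; v] else [:: shift_up x].

Definition ins_succ l := flatten (map expand l).
Definition ins_succ_rev l := flatten (map expand_rev l).
Definition del_succ l := map shift_down (filter (predC1 v.+1) l).

Lemma ins_succ_cons x l : ins_succ (x :: l) = expand x ++ ins_succ l.
Proof. by []. Qed.

Lemma ins_succ_cat l1 l2 : ins_succ (l1 ++ l2) = ins_succ l1 ++ ins_succ l2.
Proof. by rewrite /ins_succ map_cat flatten_cat. Qed.

Lemma ins_succ_rcons l x : ins_succ (rcons l x) = ins_succ l ++ expand x.
Proof. by rewrite -cats1 ins_succ_cat /ins_succ /= cats0. Qed.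

Lemma del_succ_cons x l :
  del_succ (x :: l) = if x == v.+1 then del_succ l else shift_down x :: del_succ l.
Proof. by rewrite /del_succ /=; case: eqP. Qed.

Lemma del_succ_cat l1 l2 : del_succ (l1 ++ l2) = del_succ l1 ++ del_succ l2.
Proof. by rewrite /del_succ filter_cat map_cat. Qed.

Lemma del_succ_rcons l x :
  del_succ (rcons l x) =
    if x == v.+1 then del_succ l else rcons (del_succ l) (shift_down x).
Proof. by rewrite -!cats1 del_succ_cat del_succ_cons; case: eqP; rewrite ?cats0. Qed.

Lemma del_succ_expand x : del_succ (expand x) = [:: x].
Proof.
rewrite /expand; case: eqP => [->|/eqP xv].
  by rewrite !del_succ_cons eqxx (ltn_eqF (ltnSn v)) /shift_down !ltnNge leqnSn.
rewrite del_succ_cons.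
have -> : (shift_up x == v.+1) = false by rewrite /shift_up; case: ifP; lia.
by congr [:: _]; rewrite /shift_down /shift_up; case: ifP; case: ifP; lia.
Qed.

Lemma del_ins_succ l : del_succ (ins_succ l) = l.
Proof.
by elim: l => // x l IH; rewrite ins_succ_cons del_succ_cat del_succ_expand IH.
Qed.

Lemma ins_succ_id l : all (fun x => x < v) l -> ins_succ l = l.
Proof.
elim: l => //= x l IH /andP [xv /IH]; rewrite ins_succ_cons => ->.
by rewrite /expand /shift_up (ltn_eqF xv) ltnNge (ltnW xv).
Qed.

Lemma ins_succ_iota n : 0 < v <= n -> ins_succ (iota 1 n) = iota 1 n.+1.
Proof.
elim: n => [|n IH] vn; first lia.
rewrite iotaSr ins_succ_rcons; have [vn1|vn1] := ltnP v n.+1.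
  rewrite IH; last lia.
  by rewrite /expand ifN_eq ?(gtn_eqF vn1) // /shift_up vn1 [RHS]iotaSr cats1.
have def_v : 1 + n = v by lia.
rewrite ins_succ_id; last by apply/allP => x; rewrite mem_iota; lia.
by rewrite def_v /expand eqxx -[n.+2]addn2 iotaD def_v.
Qed.

Lemma ins_del_succ_id l : v \notin l -> v.+1 \notin l -> ins_succ (del_succ l) = l.
Proof.
elim: l => // x l IH; rewrite !inE !negb_or => /andP [vx vl] /andP [v1x v1l].
rewrite del_succ_cons eq_sym (negbTE v1x) ins_succ_cons IH //.
have sdx : shift_down x != v by rewrite /shift_down; case: ifP; lia.
rewrite /expand (negbTE sdx) /=; congr (_ :: _).
by rewrite /shift_up /shift_down; case: ifP; case: ifP; lia.
Qed.

Definition glued q := infix [:: v; v.+1] q.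

Lemma ins_del_succ q : uniq q -> glued q -> ins_succ (del_succ q) = q.
Proof.
move=> uq /infixP [l1 [l2 def_q]]; move: uq; rewrite def_q cat_uniq /= !inE.
rewrite !negb_or (eq_sym v) (gtn_eqF (ltnSn v)) /=.
move=> /and5P [_ /and3P [vl1 v1l1 _] vl2 v1l2 _].
rewrite !del_succ_cat !del_succ_cons eqxx (ltn_eqF (ltnSn v)) /=.
rewrite ins_succ_cat ins_succ_cons !ins_del_succ_id //.
by rewrite /shift_down ltnNge leqnSn /= /expand eqxx.
Qed.

Definition expand_last x := if x == v then v.+1 else shift_up x.

Lemma no_succ_ge_expand a b :
  no_succ_ge v.+1 (expand_last a) (shift_up b) = no_succ_ge v a b.
Proof.
rewrite /no_succ_ge /expand_last /shift_up.
by case: eqP => [->|/eqP]; repeat case: ifP; lia.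
Qed.

Lemma path_ins_succ x l :
  path (no_succ_ge v.+1) (expand_last x) (ins_succ l) = path (no_succ_ge v) x l.
Proof.
elim: l x => // y l IH x; rewrite ins_succ_cons /= -IH -no_succ_ge_expand.
rewrite /expand {3}/expand_last; case: eqP => [->|_] //=.
by rewrite /shift_up ltnn {2}/no_succ_ge ltnSn.
Qed.

Lemma sorted_ins_succ l :
  sorted (no_succ_ge v.+1) (ins_succ l) = sorted (no_succ_ge v) l.
Proof.
case: l => // x l; rewrite ins_succ_cons [sorted _ (x :: l)]/= -path_ins_succ.
rewrite /expand /expand_last; case: eqP => _ //=.
by rewrite {1}/no_succ_ge ltnSn.
Qed.

Lemma glued_ins_succ l : v \in l -> glued (ins_succ l).
Proof.
case/splitPr=> l1 l2; rewrite ins_succ_cat ins_succ_cons /expand eqxx.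
exact: infix_infix.
Qed.

Lemma sorted_del_succ q : uniq q -> glued q ->
  sorted (no_succ_ge v) (del_succ q) = sorted (no_succ_ge v.+1) q.
Proof. by move=> uq gq; rewrite -sorted_ins_succ ins_del_succ. Qed.

Lemma no_succ_geS a b :
  no_succ_ge v a b = no_succ_ge v.+1 a b && ~~ ((v == a) && (v.+1 == b)).
Proof.
rewrite /no_succ_ge.
by case: (v =P a) => [<-|]; case: (v.+1 =P b) => [<-|]; lia.
Qed.

Lemma sorted_no_succ_geS q :
  sorted (no_succ_ge v) q = sorted (no_succ_ge v.+1) q && ~~ glued q.
Proof.
case: q => // x q; rewrite /glued /=.
elim: q x => [|y q IH] x /=; first by rewrite andbF.
by rewrite IH no_succ_geS prefix0s andbT !negb_or -!andbA; do !bool_congr.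
Qed.

Definition del_state s :=
  TSState (del_succ (ts_in s)) (del_succ (ts_st1 s)) (del_succ (ts_st2 s))
          (del_succ (ts_out s)).

(* The first stack has its top at the head, so it holds the block v, v+1
   reversed. *)
Definition ins_state s :=
  TSState (ins_succ (ts_in s)) (ins_succ_rev (ts_st1 s)) (ins_succ (ts_st2 s))
          (ins_succ (ts_out s)).

Lemma del_state_step m s s1 : ts_step m s = Some s1 ->
  exists ms, ts_run ms (del_state s) = Some (del_state s1).
Proof.
case: s => i a b o; case: m => /=; [case: i | case: a | case: b] => // x l [<-];
  rewrite /del_state /= ?del_succ_cons ?del_succ_rcons; case: eqP => _;
  by [exists [::] | exists [:: Rho] | exists [:: Lambda] | exists [:: Mu]].
Qed.

Lemma ins_state_step m s s1 : ts_step m s = Some s1 ->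
  exists ms, ts_run ms (ins_state s) = Some (ins_state s1).
Proof.
case: s => i a b o; case: m => /=; [case: i | case: a | case: b] => // x l [<-];
  rewrite /ins_state /= ?ins_succ_rcons /ins_succ /ins_succ_rev /= /expand /expand_rev;
  case: eqP => _.
- by exists [:: Rho; Rho].
- by exists [:: Rho].
- by exists [:: Lambda; Lambda].
- by exists [:: Lambda].
- by exists [:: Mu; Mu]; rewrite /= -!cats1 -catA.
- by exists [:: Mu]; rewrite /= -!cats1.
Qed.

Lemma achievable_del_succ n q :
  0 < v <= n -> achievable n.+1 q -> achievable n (del_succ q).
Proof.
move=> vn [ms run]; have [ms' run'] := ts_run_simulate del_state_step run.
by exists ms'; move: run'; rewrite /del_state -(ins_succ_iota vn) del_ins_succ.
Qed.

Lemma achievable_ins_succ n q :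
  0 < v <= n -> achievable n q -> achievable n.+1 (ins_succ q).
Proof.
move=> vn [ms run]; have [ms' run'] := ts_run_simulate ins_state_step run.
by exists ms'; move: run'; rewrite /ins_state /= ins_succ_iota.
Qed.

End Succession.

Lemma count_predD (T : Type) (a b : pred T) s :
  count a s = count (predI a b) s + count (predD a b) s.
Proof. by elim: s => //= x s ->; case: (a x); case: (b x) => /=; lia. Qed.

Lemma count_le_can (T1 T2 : eqType) (s1 : seq T1) (s2 : seq T2)
    (P1 : pred T1) (P2 : pred T2) (f : T1 -> T2) (g : T2 -> T1) :
  uniq s1 ->
  (forall x, x \in s1 -> P1 x -> [/\ f x \in s2, P2 (f x) & g (f x) = x]) ->
  count P1 s1 <= count P2 s2.
Proof.
move=> uniq_s1 hf; rewrite -!size_filter -(size_map f); apply: uniq_leq_size.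
  rewrite map_inj_in_uniq ?filter_uniq // => x y; rewrite !mem_filter.
  move=> /andP [P1x /hf/(_ P1x) [_ _ gfx]] /andP [P1y /hf/(_ P1y) [_ _ gfy]] fxy.
  by rewrite -gfx fxy gfy.
move=> y /mapP [x]; rewrite mem_filter => /andP [P1x /hf/(_ P1x) [s2fx P2fx _]] ->.
by rewrite mem_filter P2fx.
Qed.

Lemma count_bij (T1 T2 : eqType) (s1 : seq T1) (s2 : seq T2)
    (P1 : pred T1) (P2 : pred T2) (f : T1 -> T2) (g : T2 -> T1) :
  uniq s1 -> uniq s2 ->
  (forall x, x \in s1 -> P1 x -> [/\ f x \in s2, P2 (f x) & g (f x) = x]) ->
  (forall y, y \in s2 -> P2 y -> [/\ g y \in s1, P1 (g y) & f (g y) = y]) ->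
  count P1 s1 = count P2 s2.
Proof.
move=> u1 u2 hf hg.
by apply: anti_leq; rewrite (count_le_can u1 hf) (count_le_can u2 hg).
Qed.

Lemma perm_del_succ v n q : 0 < v <= n ->
  perm_eq q (iota 1 n.+1) -> perm_eq (del_succ v q) (iota 1 n).
Proof.
move=> vn pq; rewrite -(del_ins_succ v (iota 1 n)) ins_succ_iota //.
exact/perm_map/perm_filter.
Qed.

Lemma perm_ins_succ v n q : 0 < v <= n ->
  perm_eq q (iota 1 n) -> perm_eq (ins_succ v q) (iota 1 n.+1).
Proof. by move=> vn pq; rewrite -(ins_succ_iota vn); exact/perm_flatten/perm_map. Qed.

Lemma sorted_no_succ_ge_bounded m q :
  all (fun b => b <= m) q -> sorted (no_succ_ge m) q.
Proof.
case: q => //= x q /andP [_]; elim: q x => //= y q IH x /andP [ym /IH ->].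
by rewrite andbT /no_succ_ge; lia.
Qed.

Lemma no_succession_sorted q : no_succession q = sorted (fun a b => b != a.+1) q.
Proof.
case: q => // x q; rewrite /no_succession /=.
by elim: q x => //= y q IH x; rewrite IH.
Qed.

Definition h_num n m :=
  count (fun q => `[< achievable n q >] && sorted (no_succ_ge m) q)
        (permutations (iota 1 n)).

Lemma h_num_diag n : h_num n n = s_num n.
Proof.
apply: eq_in_count => q; rewrite mem_permutations => pq /=.
rewrite sorted_no_succ_ge_bounded ?andbT //.
by apply/allP => x; rewrite (perm_mem pq) mem_iota; lia.
Qed.

Lemma h_num1 n : h_num n 1 = t_num n.
Proof.
apply: eq_in_count => q; rewrite mem_permutations => pq /=.
rewrite no_succession_sorted; congr (_ && _).
apply: (@eq_in_sorted _ [pred x | 0 < x]).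
  by move=> a b; rewrite !inE /no_succ_ge; case: a.
by apply/allP => x; rewrite (perm_mem pq) mem_iota inE; lia.
Qed.

Lemma h_numS n v : 0 < v <= n -> h_num n.+1 v.+1 = h_num n.+1 v + h_num n v.
Proof.
move=> vn; rewrite /h_num (count_predD _ (glued v)) addnC; congr (_ + _).
  by apply: eq_count => q; rewrite /= (sorted_no_succ_geS v) -!andbA; do !bool_congr.
apply: (count_bij (f := del_succ v) (g := ins_succ v)); rewrite ?permutations_uniq //.
  move=> q; rewrite mem_permutations => pq /= /andP [/andP [/asboolP ach sq] gq].
  have uq : uniq q by rewrite (perm_uniq pq) iota_uniq.
  rewrite mem_permutations perm_del_succ // sorted_del_succ // sq ins_del_succ //.
  by split=> //; rewrite andbT; apply/asboolP; apply: achievable_del_succ.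
move=> p; rewrite mem_permutations => pp /andP [/asboolP ach sp].
have vp : v \in p by rewrite (perm_mem pp) mem_iota; lia.
rewrite mem_permutations perm_ins_succ //= sorted_ins_succ sp glued_ins_succ //.
by rewrite del_ins_succ !andbT; split=> //; apply/asboolP; apply: achievable_ins_succ.
Qed.

Lemma h_num_binomial k n : k < n ->
  h_num n k.+1 = \sum_(1 <= i < n.+1) 'C(k, n - i) * t_num i.
Proof.
elim: k n => [|k IH] n kn.
  rewrite h_num1 big_nat_recr //= subnn bin0 mul1n big1_seq // => i.
  rewrite mem_index_iota => /and3P [_ _ lt_in].
  by rewrite bin0n subn_eq0 leqNgt lt_in.
case: n kn => [|n] kn; first lia.
rewrite h_numS; last lia.
rewrite !IH; try lia.
rewrite [X in X + _ = _]big_nat_recr //= [RHS]big_nat_recr //= subnn !bin0.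
rewrite addnAC; congr (_ + _).
rewrite -big_split /=; apply: eq_big_nat => i /andP [_ lt_in].
by rewrite subSn // binS mulnDl.
Qed.

Lemma s_num_binomial n : 0 < n ->
  s_num n = \sum_(1 <= i < n.+1) 'C(n.-1, i.-1) * t_num i.
Proof.
case: n => // n _; rewrite -h_num_diag h_num_binomial //.
apply: eq_big_nat => i /andP [i_gt0 le_in]; congr (_ * _).
rewrite -bin_sub; last lia.
by congr 'C(_, _); lia.
Qed.

Lemma s_num0 : s_num 0 = 1.
Proof. by rewrite /s_num /= asboolT //; exists [::]. Qed.

Lemma t_num0 : t_num 0 = 1.
Proof. by rewrite /t_num /= asboolT //; exists [::]. Qed.

Lemma s_numS N n : n < N ->
  s_num n.+1 = \sum_(i < N) 'C(n, i) * t_num i.+1.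
Proof.
move=> lt_nN; rewrite s_num_binomial // big_add1 /=.
rewrite -(big_mkord xpredT (fun i => 'C(n, i) * t_num i.+1)%N).
rewrite [RHS](big_cat_nat _ (n := n.+1)) //= [X in _ = _ + X]big1_seq ?addn0 // => i.
by rewrite mem_index_iota => /andP [_ /andP [lt_ni _]]; rewrite bin_small.
Qed.

Local Open Scope ring_scope.

Section PowerSeries.

Variable R : comNzRingType.

Definition eq_modXn n (p q : {poly R}) := exists r, p = q + r * 'X ^+ n.

Lemma eq_modXn_refl n p : eq_modXn n p p.
Proof. by exists 0; rewrite mul0r addr0. Qed.

Lemma eq_modXnD n p1 p2 q1 q2 :
  eq_modXn n p1 q1 -> eq_modXn n p2 q2 -> eq_modXn n (p1 + p2) (q1 + q2).
Proof. by move=> [r1 ->] [r2 ->]; exists (r1 + r2); rewrite mulrDl addrACA. Qed.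

Lemma eq_modXnMl n c p q : eq_modXn n p q -> eq_modXn n (c * p) (c * q).
Proof. by move=> [r ->]; exists (c * r); rewrite mulrDr mulrA. Qed.

Lemma eq_modXnZ n c p q : eq_modXn n p q -> eq_modXn n (c *: p) (c *: q).
Proof. by rewrite -!mul_polyC; apply: eq_modXnMl. Qed.

Lemma eq_modXn_take n p q : eq_modXn n p q -> take_poly n p = take_poly n q.
Proof. by move=> [r ->]; rewrite take_polyD take_polyMXn_0 addr0. Qed.

(* The truncation below x^(N+1) of x^(i+1) / (1-x)^(i+1). *)
Definition binomial_series N i : {poly R} :=
  \sum_(n < N) 'C(n, i)%:R *: 'X ^+ n.+1.

Lemma binomial_series0 N : (1 - 'X) * binomial_series N 0 = 'X - 'X ^+ N.+1.
Proof.
elim: N => [|N IH]; first by rewrite /binomial_series big_ord0 mulr0 expr1 subrr.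
rewrite /binomial_series big_ord_recr /= -/(binomial_series N 0) mulrDr IH.
by rewrite bin0 scale1r !exprS; ring.
Qed.

Lemma binomial_seriesS N i : (1 - 'X) * binomial_series N i.+1 =
  'X * binomial_series N i - 'C(N, i.+1)%:R *: 'X ^+ N.+1.
Proof.
elim: N => [|N IH].
  by rewrite /binomial_series !big_ord0 mulr0 bin0n scale0r subr0 mulr0.
rewrite /binomial_series !big_ord_recr /= -!/(binomial_series N _) !mulrDr IH.
by rewrite binS -!mul_polyC natrD rmorphD /= !exprS; ring.
Qed.

Lemma binomial_series_modXn N i :
  eq_modXn N.+1 ((1 - 'X) ^+ i.+1 * binomial_series N i) ('X ^+ i.+1).
Proof.
elim: i => [|i [r IH]]; first by exists (-1); rewrite expr1 binomial_series0; ring.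
exists ('X * r - (1 - 'X) ^+ i.+1 * 'C(N, i.+1)%:R%:P).
rewrite exprSr -mulrA binomial_seriesS -mul_polyC mulrBr mulrA.
by rewrite [(1 - 'X) ^+ i.+1 * 'X]mulrC -mulrA IH !exprS; ring.
Qed.

Lemma binomial_series_mul_1subX N i : (i < N)%N ->
  eq_modXn N.+1 ((1 - 'X) ^+ N * binomial_series N i)
                ('X ^+ i.+1 * (1 - 'X) ^+ (N - i.+1)).
Proof.
move=> lt_iN.
have -> : (1 - 'X : {poly R}) ^+ N = (1 - 'X) ^+ (N - i.+1) * (1 - 'X) ^+ i.+1.
  by rewrite -exprD subnK.
by rewrite -mulrA [X in eq_modXn _ _ X]mulrC; apply/eq_modXnMl/binomial_series_modXn.
Qed.

End PowerSeries.

Lemma s_num_series N :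
  \sum_(n < N.+1) (s_num n)%:R *: ('X ^+ n : {poly int}) =
  1 + \sum_(i < N) (t_num i.+1)%:R *: binomial_series int N i.
Proof.
rewrite big_ord_recl s_num0 scale1r; congr (_ + _).
under eq_bigr => n _ do rewrite (s_numS (ltn_ord n)) natr_sum scaler_suml.
rewrite exchange_big /=; apply: eq_bigr => i _; rewrite scaler_sumr.
by apply: eq_bigr => n _; rewrite natrM scalerA mulrC.
Qed.

Theorem mainTheorem2 :
  (forall N : nat,
     take_poly N.+1 ((1 - 'X) ^+ N *
        \sum_(n < N.+1) (s_num n)%:R *: ('X ^+ n : {poly int}))
     = take_poly N.+1
        (\sum_(i < N.+1) (t_num i)%:R *: ('X ^+ i * (1 - 'X) ^+ (N - i))))
  /\
  (forall n : nat, (1 <= n)%N ->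
     s_num n = (\sum_(1 <= i < n.+1) 'C(n.-1, i.-1) * t_num i)%N).
Proof.
split; last exact: s_num_binomial.
move=> N; apply: eq_modXn_take.
rewrite s_num_series big_ord_recl t_num0 scale1r mul1r subn0 mulrDr mulr1.
apply: eq_modXnD; first exact: eq_modXn_refl.
rewrite mulr_sumr; apply: (big_ind2 (eq_modXn N.+1)) => [|p1 q1 p2 q2|i _].
- exact: eq_modXn_refl.
- exact: eq_modXnD.
by rewrite -scalerAr lift0; apply/eq_modXnZ/binomial_series_mul_1subX.
Qed.
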